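(* For $n\ge 2$ let $X^n$ be the continuous-time Markov chain on $V_n=\{v_0,\dots,v_{2n}\}$, $A=v_0$, $B=v_n$, $C=v_{2n}$, with nonzero jump rates $q(v_i,v_{i+1})=1$ for $0\le i\le 2n-1$, $i\neq n$; $q(B,v_{n+1})=1/n$, $q(B,C)=1-1/n$; $q(v_{i+1},v_i)=2^{-n^2}$ for $0\le i\le 2n-1$; $q(C,B)=(n-1)2^{-n^3}$. Let $P^n_t$ be its semigroup and $\pi_n$ its reversible stationary distribution. Then for all $n$ sufficiently large, for all $x,y\in V_n\setminus\{C\}$ and all $t$ with $n/2\le t\le 3n$, \[ P^n_t(x,y)\ge \pi_n(y). \]
   Context: The graph underlying $X^n$ is a path $v_0\cdots v_{2n}$ plus an extra edge $B$–$C$; transitions occur only along edges with the given rates. *)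

From HB Require Import structures.
From mathcomp Require Import all_boot all_order all_algebra.
From mathcomp Require Import all_classical all_reals all_analysis.
Set Implicit Arguments. Unset Strict Implicit. Unset Printing Implicit Defensive.
Import Order.TTheory GRing.Theory Num.Theory.
Import numFieldNormedType.Exports.
Local Open Scope ring_scope.

(* State space V_n = {v_0, ..., v_{2n}} encoded as 'I_(2n).+1, v_i <-> i.
   A = v_0, B = v_n, C = v_{2n}. *)
Notation state n := 'I_((n.*2).+1).

Definition rate (R : realType) (n : nat) (x y : state n) : R :=
  let i := nat_of_ord x in let j := nat_of_ord y in
  if (j == i.+1)%N then (if (i == n)%N then n%:R^-1 else 1)
  else if ((i == n) && (j == n.*2))%N then 1 - n%:R^-1
  else if (i == j.+1)%N then (2 ^+ (n ^ 2))^-1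
  else if ((i == n.*2) && (j == n))%N then (n.-1)%:R * (2 ^+ (n ^ 3))^-1
  else 0.
Arguments rate : clear implicits.

Definition generator (R : realType) (n : nat) : 'M[R]_((n.*2).+1) :=
  \matrix_(x < (n.*2).+1, y < (n.*2).+1) (if x == y then - \sum_(z | z != x) rate R n x z
                  else rate R n x y).
Arguments generator : clear implicits.

Definition semigroup (R : realType) (n : nat) (t : R) (x y : state n) : R :=
  let u : R^nat := fun k => t ^+ k / (k`!)%:R * ((generator R n) ^+ k) x y in
  limn (series u).
Arguments semigroup : clear implicits.

Definition reversible_distribution (R : realType) (n : nat) (pi : state n -> R) : Prop :=
  (forall x, 0 <= pi x) /\ (\sum_x pi x = 1) /\
  (forall x y, pi x * rate R n x y = pi y * rate R n y x).
Arguments reversible_distribution : clear implicits.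

(* The generator Q of X^n has exit rates at most 4, so S := Q + 5 I is entrywise
   nonnegative with diagonal at least 1, and P_t = e^{-5t} e^{tS} (Cauchy product of
   the two exponential series).  Keeping only the term of order 2n,
   P_t(x,y) >= e^{-5t} t^{2n}/(2n)! S^{2n}(x,y).  Following the path from x to y
   (idling with S(z,z) >= 1) gives S^{2n}(x,y) >= n^{-1} q^{(x-y)_+} with
   q = 2^{-n^2}, and for t in [n/2, 3n] the weight e^{-5t} t^{2n}/(2n)! is at least
   2^{-34n}.  Detailed balance along the path from C gives
   pi(y) <= n q^{2n-y} <= n q q^{(x-y)_+} for y <> C, and n q <= 2^{-34n} n^{-1}
   as soon as n >= 40. *)

From Pilot Require Import Defs.
From HB Require Import structures.
From mathcomp Require Import all_boot all_order all_algebra.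
From mathcomp Require Import all_classical all_reals all_analysis.
Import Order.TTheory GRing.Theory Num.Theory.
Import numFieldNormedType.Exports.
From mathcomp Require Import ring lra zify.
Local Open Scope classical_set_scope.
Local Open Scope ring_scope.

Section NonnegMatrixPower.
Variables (R : numDomainType) (m : nat) (M : 'M[R]_m).
Hypothesis M_ge0 : forall i j, 0 <= M i j.

Lemma mxpow_ge0 k i j : 0 <= (M ^+ k) i j.
Proof.
elim: k i j => [|k IH] i j; first by rewrite expr0 mxE ler0n.
by rewrite exprS -mulmxE mxE; apply: sumr_ge0 => l _; apply: mulr_ge0.
Qed.

Lemma mxpow_ge_mul a b i z j : (M ^+ a) i z * (M ^+ b) z j <= (M ^+ (a + b)) i j.
Proof.
rewrite exprD -mulmxE mxE (bigD1 z) //= lerDl.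
by apply: sumr_ge0 => l _; apply: mulr_ge0; apply: mxpow_ge0.
Qed.

Lemma mxpow_diag_ge1 k i : 1 <= M i i -> 1 <= (M ^+ k) i i.
Proof.
move=> Mii; elim: k => [|k IH]; first by rewrite expr0 mxE eqxx.
apply: le_trans (mxpow_ge_mul 1 k i i i); rewrite expr1.
by rewrite -[1]mulr1; apply: ler_pM.
Qed.
End NonnegMatrixPower.
Arguments mxpow_ge0 {R m M}.
Arguments mxpow_ge_mul {R m M}.
Arguments mxpow_diag_ge1 {R m M}.

Lemma mxpow_norm_le (R : realDomainType) m (M : 'M[R]_m) (b : R) :
  (forall i j, `|M i j| <= b) -> forall k i j, `|(M ^+ k) i j| <= (b * m%:R) ^+ k.
Proof.
move=> Mb; elim=> [|k IH] i j.
  by rewrite expr0 expr0 mxE; case: (i == j); rewrite ?normr1 ?normr0.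
rewrite exprSr -mulmxE mxE exprSr; apply: le_trans (ler_norm_sum _ _ _) _.
apply: le_trans (_ : \sum_(l < m) (b * m%:R) ^+ k * b <= _).
  by apply: ler_sum => l _; rewrite normrM; apply: ler_pM; rewrite ?normr_ge0.
by rewrite sumr_const card_ord -mulrnAr mulr_natr.
Qed.

Definition cauchy_product {R : pzSemiRingType} (a b : R ^nat) : R ^nat :=
  fun k => \sum_(i < k.+1) a (k - i)%N * b i.

Lemma series_cauchy_productE (R : comPzRingType) (a b : R ^nat) K :
  series (cauchy_product a b) K = \sum_(i < K) b i * series a (K - i)%N.
Proof.
elim: K => [|K IH]; first by rewrite /series /= big_geq // big_ord0.
rewrite seriesSr IH [in RHS]big_ord_recr /= subSnn.
have -> : series a 1 = a 0%N by rewrite seriesS /series /= big_geq // addr0.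
rewrite /cauchy_product big_ord_recr /= subnn addrA [a 0%N * _]mulrC.
congr (_ + _); rewrite -big_split /=; apply: eq_bigr => i _.
by rewrite subSn 1?ltnW // seriesSr mulrDr [b i * a _]mulrC.
Qed.

Lemma norm_series_cauchy_productB (R : realFieldType) (a b : R ^nat) K :
  `|series (cauchy_product a b) K - series a K * series b K|
    <= [normed series b] K./2 * ([normed series a] K - [normed series a] K./2)
     + [normed series a] K * ([normed series b] K - [normed series b] K./2).
Proof.
rewrite /normed_series_of /=.
set Ab := [series `|a n|]_n; set Bb := [series `|b n|]_n.
have Ab_nd : nondecreasing_seq Ab.
  by move=> i j ij; apply: nondecreasing_series => // *; exact: normr_ge0.
have Ab_ge0 i : 0 <= Ab i by apply: sumr_ge0 => *; exact: normr_ge0.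
have half_le : (K./2 <= K)%N by rewrite leq_half_double; lia.
have Bb_half : Bb K./2 = \sum_(i < K | (i < K./2)%N) `|b i|.
  by rewrite /Bb seriesEord /= (big_ord_widen K (fun i => `|b i|)).
have Bb_full : Bb K = \sum_(i < K | (i < K./2)%N) `|b i| + \sum_(i < K | ~~ (i < K./2)%N) `|b i|.
  by rewrite /Bb seriesEord /= (bigID (fun i : 'I_K => (i < K./2)%N)).
have -> : series a K * series b K = \sum_(i < K) b i * series a K.
  by rewrite mulrC (seriesEord b) /= mulr_suml.
rewrite series_cauchy_productE -sumrB; apply: le_trans (ler_norm_sum _ _ _) _.
have term i : (i <= K)%N ->
    `|b i * series a (K - i)%N - b i * series a K| <= `|b i| * (Ab K - Ab (K - i)%N).
  move=> iK; rewrite -mulrBr normrM ler_wpM2l // distrC sub_series_geq ?leq_subr //.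
  by rewrite /Ab sub_series_geq ?leq_subr //; exact: ler_norm_sum.
rewrite (bigID (fun i : 'I_K => (i < K./2)%N)) /=; apply: lerD.
- apply: le_trans (_ : \sum_(i < K | (i < K./2)%N) `|b i| * (Ab K - Ab K./2) <= _).
    apply: ler_sum => i iK; apply: le_trans (term i (ltnW (ltn_ord i))) _.
    by rewrite ler_wpM2l // lerD2l lerN2; apply: Ab_nd; lia.
  by rewrite -mulr_suml Bb_half.
- apply: le_trans (_ : \sum_(i < K | ~~ (i < K./2)%N) `|b i| * Ab K <= _).
    apply: ler_sum => i iK; apply: le_trans (term i (ltnW (ltn_ord i))) _.
    by rewrite ler_wpM2l // gerBl.
  by rewrite -mulr_suml Bb_full Bb_half addrC addKr mulrC.
Qed.

Lemma cvg_half {T : topologicalType} (u : nat -> T) (l : T) :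
  u @ \oo --> l -> (fun k => u k./2) @ \oo --> l.
Proof.
apply: cvg_comp => P [N _ HN]; exists N.*2 => // K /= HK; apply: HN => /=.
by rewrite -(half_double N) half_leq.
Qed.

Lemma cvg_series_cauchy_product (R : realType) (a b : R ^nat) :
  cvgn [normed series a] -> cvgn [normed series b] ->
  series (cauchy_product a b) @ \oo --> limn (series a) * limn (series b).
Proof.
move=> na nb; have Ca := normed_cvg na; have Cb := normed_cvg nb.
pose bound K := [normed series b] K./2 * ([normed series a] K - [normed series a] K./2)
  + [normed series a] K * ([normed series b] K - [normed series b] K./2).
have bound0 : bound @ \oo --> 0.
  move/cvgP: (na) => /cvg_half na2; move/cvgP: (nb) => /cvg_half nb2.
  move/cvgP: na => na; move/cvgP: nb => nb.
  set Al := limn [normed series a] in na na2; set Bl := limn [normed series b] in nb nb2.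
  have -> : (0 : R) = Bl * (Al - Al) + Al * (Bl - Bl) by rewrite !subrr !mulr0 addr0.
  by apply: cvgD; apply: cvgM => //; apply: cvgB.
apply: (cvg_sub0 (g := fun K => series a K * series b K)); last exact: cvgM.
apply: (@squeeze_cvgr _ _ _ _ (fun K => - bound K) bound); last exact: bound0.
- by near=> K; rewrite -ler_norml; exact: norm_series_cauchy_productB.
- by rewrite -oppr0; exact: cvgN.
Unshelve. all: by end_near.
Qed.

Section MatrixExponentialSeries.
Variables (R : realType) (m : nat).

Definition mxexp_term (M : 'M[R]_m) (t : R) (i j : 'I_m) : R ^nat :=
  fun k => t ^+ k / k`!%:R * (M ^+ k) i j.

Lemma is_cvg_normed_mxexp_term M t i j : cvgn [normed series (mxexp_term M t i j)].
Proof.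
pose b := \big[Num.max/0]_(p : 'I_m * 'I_m) `|M p.1 p.2|.
have Mb i' j' : `|M i' j'| <= b by exact: (le_bigmax _ _ (i', j')).
apply: (@series_le_cvg _ _ (exp_coeff (`|t| * (b * m%:R)))) => [k|k|k|].
- exact: normr_ge0.
- by rewrite exp_coeff_ge0 // mulr_ge0 ?mulr_ge0 ?ler0n // (le_trans _ (Mb i j)).
- rewrite /mxexp_term /exp_coeff /= !normrM normfV normr_nat normrX exprMn.
  rewrite [X in X <= _]mulrAC ler_pM2r ?invr_gt0 ?ltr0n ?fact_gt0 //.
  by apply: ler_wpM2l; rewrite ?exprn_ge0 //; exact: mxpow_norm_le.
- exact: is_cvg_series_exp_coeff.
Qed.

Lemma mxexp_term_shift (c : R) M t i j :
  mxexp_term (c%:M + M) t i j = cauchy_product (exp_coeff (c * t)) (mxexp_term M t i j).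
Proof.
apply/funext => k; have cM : GRing.comm c%:M M by rewrite /GRing.comm -!mulmxE scalar_mxC.
rewrite /mxexp_term /cauchy_product exprDn_comm // summxE mulr_sumr.
apply: eq_bigr => l _; have lk : (l <= k)%N by rewrite -ltnS.
rewrite mulmxnE -rmorphXn -mulmxE mul_scalar_mx mxE /exp_coeff /=.
have fact_split : (k`!%:R : R) = 'C(k, l)%:R * (l`!%:R * (k - l)`!%:R).
  by rewrite -!natrM bin_fact.
have t_split : t ^+ k = t ^+ (k - l) * t ^+ l by rewrite -exprD subnK.
rewrite fact_split t_split exprMn -mulr_natr.
have nz (p : nat) : (p`!%:R : R) != 0 by rewrite pnatr_eq0 -lt0n fact_gt0.
field; by rewrite nz nz pnatr_eq0 -lt0n bin_gt0 lk.
Qed.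

Lemma lim_mxexp_term_shift (c : R) M t i j :
  limn (series (mxexp_term (c%:M + M) t i j))
  = expR (c * t) * limn (series (mxexp_term M t i j)).
Proof.
rewrite mxexp_term_shift; apply: cvg_lim => //; apply: cvg_series_cauchy_product.
- by rewrite normed_series_exp_coeff; exact: is_cvg_series_exp_coeff.
- exact: is_cvg_normed_mxexp_term.
Qed.

Lemma mxexp_term_le_lim (M : 'M[R]_m) (t : R) i j k :
  0 <= t -> (forall i' j', 0 <= M i' j') ->
  mxexp_term M t i j k <= limn (series (mxexp_term M t i j)).
Proof.
move=> t0 M0; have term_ge0 l : 0 <= mxexp_term M t i j l.
  by apply: mulr_ge0; [rewrite divr_ge0 ?exprn_ge0 ?ler0n|exact: mxpow_ge0].
apply: (le_trans _ (_ : series (mxexp_term M t i j) k.+1 <= _)).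
  by rewrite seriesSr lerDr; apply: sumr_ge0.
apply: nondecreasing_cvgn_le; first by move=> p r pr; exact: nondecreasing_series.
exact/normed_cvg/is_cvg_normed_mxexp_term.
Qed.
End MatrixExponentialSeries.
Arguments mxexp_term {R m}.

Lemma fact_leq_expn k : (k`! <= k ^ k)%N.
Proof.
elim: k => [|k IH] //; rewrite factS expnS leq_mul2l /=.
by apply: leq_trans IH _; case: k => [|k] //; rewrite leq_exp2r.
Qed.

Lemma sq_leq_exp2 k : (4 <= k)%N -> (k * k <= 2 ^ k)%N.
Proof.
elim: k => [|k IH] // k4; case: (ltngtP k 4) => [k_lt4|k_gt4|->] //.
- by have -> : k = 3%N by lia.
- by have := IH (ltnW k_gt4); rewrite expnS; nia.
Qed.

Lemma sq_exp34_leq_exp_sq k : (40 <= k)%N -> (k * k * 2 ^ (34 * k) <= 2 ^ (k ^ 2))%N.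
Proof.
move=> k40; apply: leq_trans (_ : 2 ^ k * 2 ^ (34 * k) <= _)%N.
  by rewrite leq_mul2r sq_leq_exp2 ?orbT //; lia.
by rewrite -expnD leq_exp2l //; nia.
Qed.

Lemma sq_mul_exp2_inv_le (R : realFieldType) (k : nat) : (40 <= k)%N ->
  k%:R * (2 ^+ (k ^ 2))^-1 <= (2 ^+ (34 * k))^-1 * k%:R^-1 :> R.
Proof.
move=> k40; have k_gt0 : 0 < k%:R :> R by rewrite ltr0n; lia.
rewrite -invfM ler_pdivrMr ?exprn_gt0 // ler_pdivlMl ?mulr_gt0 ?exprn_gt0 //.
rewrite mulrC [2 ^+ _ * _]mulrC mulrA.
by have := sq_exp34_leq_exp_sq _ k40; rewrite -(ler_nat R) !natrM !natrX.
Qed.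

Section ExponentialBounds.
Variable R : realType.

Lemma expR_half_le2 : expR (2^-1 : R) <= 2.
Proof.
have := expR_ge1Dx (- 2^-1 : R); rewrite expRN.
have -> : 1 - 2^-1 = (2^-1 : R) by field.
by rewrite lef_pV2 ?posrE ?expR_gt0 ?invr_gt0.
Qed.

Lemma exp2_inv_le_expRN (k : nat) (t : R) : 0 <= t -> t <= 3 * k%:R ->
  (2 ^+ (30 * k))^-1 <= expR (- (5 * t)).
Proof.
move=> t0 t3k; rewrite expRN lef_pV2 ?posrE ?expR_gt0 ?exprn_gt0 //.
apply: (@le_trans _ _ (expR ((30 * k)%:R * 2^-1))).
  by rewrite ler_expR natrM; lra.
rewrite expRM_natl; case: (posnP (30 * k)) => [->|k_gt0]; first by rewrite !expr0.
by rewrite ler_pXn2r ?nnegrE ?expR_ge0 //; exact: expR_half_le2.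
Qed.

Lemma exp2_inv_le_exp_term (k : nat) (t : R) : (0 < k)%N -> k%:R / 2 <= t ->
  (2 ^+ (4 * k))^-1 <= t ^+ k.*2 / k.*2`!%:R.
Proof.
move=> k_gt0 kt; have k_pos : 0 < k%:R :> R by rewrite ltr0n.
have -> : (2 ^+ (4 * k))^-1 = (k%:R / 2) ^+ k.*2 / (k.*2)%:R ^+ k.*2 :> R.
  rewrite -exprVn -expr_div_n -muln2 natrM.
  have -> : (4 * k = (k * 2) + (k * 2))%N by lia.
  rewrite exprD -exprMn; congr (_ ^+ _); field; lra.
apply: ler_pM.
- by rewrite exprn_ge0 // divr_ge0 ?ler0n.
- by rewrite invr_ge0 exprn_ge0.
- by rewrite ler_pXn2r ?nnegrE ?double_gt0 //; lra.
- rewrite lef_pV2 ?posrE ?exprn_gt0 ?ltr0n ?fact_gt0 //; last lia.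
  by rewrite -natrX ler_nat fact_leq_expn.
Qed.

Lemma exp2_inv_le_expRN_exp_term (k : nat) (t : R) :
  (0 < k)%N -> k%:R / 2 <= t -> t <= 3 * k%:R ->
  (2 ^+ (34 * k))^-1 <= expR (- (5 * t)) * (t ^+ k.*2 / k.*2`!%:R).
Proof.
move=> k_gt0 kt tk; have t0 : 0 <= t by apply: le_trans kt; rewrite divr_ge0 ?ler0n.
have -> : (34 * k = 30 * k + 4 * k)%N by lia.
rewrite exprD invfM; apply: ler_pM; rewrite ?invr_ge0 ?exprn_ge0 //.
- exact: exp2_inv_le_expRN.
- exact: exp2_inv_le_exp_term.
Qed.
End ExponentialBounds.

Lemma sum_ord_eq_leq1 m c : (\sum_(z < m) ((z : nat) == c) <= 1)%N.
Proof.
case: (ltnP c m) => cm; last first.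
  by rewrite big1 // => z _; apply/eqP; move: (ltn_ord z); lia.
rewrite (bigD1 (Ordinal cm)) //= eqxx big1 // => z zc.
by move: zc; rewrite -val_eqE /= => /negbTE ->.
Qed.

Definition shifted_generator (R : realType) (n : nat) : 'M[R]_((n.*2).+1) :=
  generator R n + 5%:M.

Lemma generator_shift (R : realType) (n : nat) :
  (-5)%:M + shifted_generator R n = generator R n.
Proof.
by apply/matrixP => i j; rewrite !mxE; case: (i == j); rewrite ?mulr1n ?mulr0n; ring.
Qed.

Section Chain.
Variables (R : realType) (n : nat).
Hypothesis n_ge2 : (2 <= n)%N.

Local Notation rate := (rate R n).
Local Notation S := (shifted_generator R n).
Local Notation q := ((2 ^+ (n ^ 2))^-1 : R).
Local Notation v i := (@inord n.*2 i).

Let n_gt0 : 0 < n%:R :> R.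
Proof. by rewrite ltr0n; lia. Qed.

Let invn_le1 : n%:R^-1 <= 1 :> R.
Proof. by rewrite invf_le1 // ler1n; lia. Qed.

Let q_ge0 : 0 <= q.
Proof. by rewrite invr_ge0 exprn_ge0. Qed.

Lemma rate_ge0 x z : 0 <= rate x z.
Proof.
rewrite /Defs.rate; repeat case: ifP => _.
all: rewrite ?invr_ge0 ?subr_ge0 ?mulr_ge0 ?ler0n ?exprn_ge0 //.
Qed.

Lemma rate_le1 x z : rate x z <= 1.
Proof.
rewrite /Defs.rate; repeat case: ifP => _ //.
all: rewrite ?gerBl ?invr_ge0 ?ler0n ?invf_le1 ?exprn_gt0 ?exprn_ege1 ?ler1n //.
rewrite ler_pdivrMr ?exprn_gt0 // mul1r -natrX ler_nat.
apply: leq_trans (_ : n <= 2 ^ (n ^ 3))%N; first lia.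
apply: leq_trans (ltnW (ltn_expl n (isT : 1 < 2)%N)) _.
by rewrite leq_pexp2l // -{1}(expn1 n) leq_exp2l //; lia.
Qed.

Lemma rate_le_support (x z : state n) :
  rate x z <= (((z : nat) == x.+1) + ((z : nat) == n.*2) + (z.+1 == x) + ((z : nat) == n))%:R.
Proof.
case E : [|| (z : nat) == x.+1, (z : nat) == n.*2, z.+1 == x | (z : nat) == n].
  apply: le_trans (rate_le1 x z) _; rewrite ler1n.
  by case/or4P: E => -> //=; rewrite ?addnS ?addSn.
move: E; rewrite /Defs.rate /=.
case: ((z : nat) =P x.+1) => //= _; case: ((z : nat) =P n.*2) => //= _.
case: (z.+1 =P x) => //= zx; case: ((z : nat) =P n) => //= _ _.
by rewrite !andbF; case: ((x : nat) =P z.+1) => // xz; case: zx; rewrite xz.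
Qed.

Lemma exit_rate_le4 (x : state n) : \sum_(z | z != x) rate x z <= 4.
Proof.
apply: le_trans (_ : \sum_(z : state n) (((z : nat) == x.+1) + ((z : nat) == n.*2)
    + (z.+1 == x) + ((z : nat) == n))%:R <= _).
  rewrite [X in _ <= X](bigD1 x) //= -[X in X <= _]add0r; apply: lerD => //.
  by apply: ler_sum => z _; exact: rate_le_support.
rewrite -natr_sum ler_nat !big_split /=.
have pred_leq1 : (\sum_(z < (n.*2).+1) (z.+1 == x) <= 1)%N.
  apply: leq_trans (sum_ord_eq_leq1 _ x.-1); apply: leq_sum => z _.
  by case: (z.+1 =P x) => // <-; rewrite /= eqxx.
exact: leq_trans (leq_add (leq_add (leq_add (sum_ord_eq_leq1 _ x.+1)
  (sum_ord_eq_leq1 _ n.*2)) pred_leq1) (sum_ord_eq_leq1 _ n)) _.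
Qed.

Lemma shifted_generator_offdiag (x y : state n) : x != y -> S x y = rate x y.
Proof. by move=> /negbTE xy; rewrite /shifted_generator !mxE xy addr0. Qed.

Lemma shifted_generator_diag (x : state n) : S x x = 5 - \sum_(z | z != x) rate x z.
Proof. by rewrite /shifted_generator !mxE eqxx mulr1n addrC. Qed.

Lemma shifted_generator_ge0 (x y : state n) : 0 <= S x y.
Proof.
have [<-|xy] := eqVneq x y; last by rewrite shifted_generator_offdiag ?rate_ge0.
by rewrite shifted_generator_diag subr_ge0 (le_trans (exit_rate_le4 x)) //; lra.
Qed.

Lemma shifted_generator_diag_ge1 (x : state n) : 1 <= S x x.
Proof. by rewrite shifted_generator_diag; have := exit_rate_le4 x; lra. Qed.

Let vK i : (i <= n.*2)%N -> (v i : nat) = i.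
Proof. exact: inordK. Qed.

Lemma rate_forward i : (i < n.*2)%N ->
  rate (v i) (v i.+1) = if (i == n)%N then n%:R^-1 else 1.
Proof. by move=> i2n; rewrite /Defs.rate /= !vK ?eqxx //; lia. Qed.

Lemma rate_backward i : (i < n.*2)%N -> rate (v i.+1) (v i) = q.
Proof.
move=> i2n; rewrite /Defs.rate /= !vK //; last lia.
have -> : (i == i.+2) = false by lia.
have -> : (i.+1 == n) && (i == n.*2) = false by lia.
by rewrite eqxx.
Qed.

Let v_neq i j : (i <= n.*2)%N -> (j <= n.*2)%N -> i != j -> v i != v j.
Proof. by move=> ? ? ij; rewrite -val_eqE /= !vK. Qed.

Lemma shifted_generator_pow_forward i j : (i <= j <= n.*2)%N ->
  (if (j <= n)%N then 1 else n%:R^-1) <= (S ^+ (j - i)) (v i) (v j).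
Proof.
elim: j => [|j IH] /andP[ij j2n].
  have -> : i = 0%N by lia.
  by rewrite subnn expr0 mxE eqxx.
have [->|ij'] := eqVneq i j.+1.
  by rewrite subnn expr0 mxE eqxx; case: ifP.
have /IH IHj : (i <= j <= n.*2)%N by lia.
have -> : (j.+1 - i = j - i + 1)%N by lia.
apply: le_trans (mxpow_ge_mul shifted_generator_ge0 (j - i) 1 _ (v j) _).
rewrite expr1 shifted_generator_offdiag ?v_neq ?rate_forward //; try lia.
apply: le_trans (_ : (if (j <= n)%N then 1 else n%:R^-1)
  * (if (j == n)%N then n%:R^-1 else 1) <= _).
  by case: (ltngtP j n) => jn; rewrite ?mulr1 ?mul1r.
by apply: ler_wpM2r => //; case: ifP; rewrite ?invr_ge0 ?ler0n.
Qed.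

Lemma shifted_generator_pow_backward j i : (j <= i <= n.*2)%N ->
  q ^+ (i - j) <= (S ^+ (i - j)) (v i) (v j).
Proof.
elim: i => [|i IH] /andP[ji i2n].
  have -> : j = 0%N by lia.
  by rewrite subnn !expr0 mxE eqxx.
have [->|ji'] := eqVneq j i.+1.
  by rewrite subnn !expr0 mxE eqxx.
have /IH IHi : (j <= i <= n.*2)%N by lia.
have -> : (i.+1 - j = 1 + (i - j))%N by lia.
apply: le_trans (mxpow_ge_mul shifted_generator_ge0 1 (i - j) _ (v i) _).
rewrite expr1 shifted_generator_offdiag ?v_neq ?rate_backward //; try lia.
by rewrite exprS; apply: ler_wpM2l.
Qed.

Lemma shifted_generator_pow_ge (x y : state n) : (x < n.*2)%N -> (y < n.*2)%N ->
  n%:R^-1 * q ^+ (x - y) <= (S ^+ n.*2) x y.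
Proof.
move=> x2n y2n.
have pad d (x' y' : state n) : (d <= n.*2)%N -> (S ^+ d) x' y' <= (S ^+ n.*2) x' y'.
  move=> d2n; have -> : S ^+ n.*2 = S ^+ (d + (n.*2 - d)) by rewrite subnKC.
  apply: le_trans (mxpow_ge_mul shifted_generator_ge0 d (n.*2 - d) x' y' y').
  rewrite -[X in X <= _]mulr1 ler_wpM2l ?(mxpow_ge0 shifted_generator_ge0) //.
  exact: mxpow_diag_ge1 shifted_generator_ge0 _ _ (shifted_generator_diag_ge1 y').
have vxy : (S ^+ n.*2) (v x) (v y) = (S ^+ n.*2) x y by rewrite !inord_val.
rewrite -vxy; case: (leqP x y) => [xy|yx].
- apply: (le_trans _ (pad (y - x)%N _ _ _)); last lia.
  apply: (le_trans _ (shifted_generator_pow_forward x y _)); last lia.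
  have -> : (x - y = 0)%N by lia.
  by rewrite expr0 mulr1; case: ifP.
- apply: (le_trans _ (pad (x - y)%N _ _ _)); last lia.
  apply: (le_trans _ (shifted_generator_pow_backward y x _)); last lia.
  by apply: ler_piMl; rewrite ?exprn_ge0.
Qed.

Lemma reversible_distribution_le pi : reversible_distribution R n pi ->
  forall y : state n, pi y <= n%:R * q ^+ (n.*2 - y).
Proof.
move=> [pi_ge0 [pi_sum pi_rev]].
suff bound d : (d <= n.*2)%N ->
    pi (v (n.*2 - d)) <= (if (n.*2 - d <= n)%N then n%:R else 1) * q ^+ d.
  move=> y; have := bound (n.*2 - y)%N (leq_subr _ _).
  rewrite subKn; last exact: ltn_ord y.
  rewrite inord_val => /le_trans; apply.
  by rewrite ler_wpM2r ?exprn_ge0 //; case: ifP => _; rewrite ?ler1n //; lia.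
elim: d => [|d IH] d2n.
  rewrite subn0 expr0 mulr1 ifF; last lia.
  by rewrite -pi_sum (bigD1 (v n.*2)) //= lerDl sumr_ge0.
have := IH (ltnW d2n); have -> : (n.*2 - d = (n.*2 - d.+1).+1)%N by lia.
set j := (n.*2 - d.+1)%N => IHj.
have := pi_rev (v j) (v j.+1); rewrite rate_forward ?rate_backward; try lia.
have [jn|jn] := eqVneq j n.
- rewrite jn ltnn mul1r in IHj; rewrite jn leqnn => pi_n.
  have -> : pi (v n) = pi (v n.+1) * q * n%:R by rewrite -pi_n mulfVK ?gt_eqF.
  by rewrite exprSr mulrC ler_wpM2l ?ler0n // ler_wpM2r.
- rewrite mulr1 => ->.
  have -> : (j <= n)%N = (j < n)%N by rewrite leq_eqVlt (negbTE jn).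
  by rewrite exprSr mulrA ler_wpM2r.
Qed.
End Chain.
Arguments shifted_generator_pow_ge R {n} n_ge2 {x} {y}.
Arguments reversible_distribution_le {R} {n} n_ge2.

Theorem lemma3p5 (R : realType) :
  exists N : nat, forall n : nat, (2 <= n)%N -> (N <= n)%N ->
    forall pi : state n -> R, reversible_distribution R n pi ->
    forall (x y : state n), nat_of_ord x != n.*2 -> nat_of_ord y != n.*2 ->
    forall t : R, n%:R / 2 <= t -> t <= 3 * n%:R ->
      pi y <= semigroup R n t x y.
Proof.
exists 40%N => n n_ge2 n_ge40 pi pi_rev x y x_neq y_neq t t_lb t_ub.
have x_lt : (x < n.*2)%N by rewrite ltn_neqAle x_neq -ltnS ltn_ord.
have y_lt : (y < n.*2)%N by rewrite ltn_neqAle y_neq -ltnS ltn_ord.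
have t_ge0 : 0 <= t by apply: le_trans t_lb; rewrite divr_ge0 ?ler0n.
set S := shifted_generator R n; set q : R := (2 ^+ (n ^ 2))^-1.
have q_ge0 : 0 <= q by rewrite invr_ge0 exprn_ge0.
have P_t : semigroup R n t x y = expR (- (5 * t)) * limn (series (mxexp_term S t x y)).
  by rewrite -mulNr -lim_mxexp_term_shift generator_shift.
have pi_y : pi y <= n%:R * q * q ^+ (x - y).
  apply: (le_trans (reversible_distribution_le n_ge2 _ pi_rev y)).
  rewrite -mulrA -exprS ler_wpM2l ?ler0n // ler_wiXn2l //; last lia.
  by rewrite invf_le1 ?exprn_gt0 // exprn_ege1 // ler1n.
rewrite P_t; apply: le_trans pi_y _.
apply: le_trans (_ : (2 ^+ (34 * n))^-1 * n%:R^-1 * q ^+ (x - y) <= _).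
  by rewrite ler_wpM2r ?exprn_ge0 // sq_mul_exp2_inv_le.
apply: le_trans (_ : expR (- (5 * t)) * mxexp_term S t x y n.*2 <= _); last first.
  by rewrite ler_wpM2l ?expR_ge0 // mxexp_term_le_lim // => i j; exact: shifted_generator_ge0.
rewrite /mxexp_term mulrA -mulrA; apply: ler_pM.
- by rewrite invr_ge0 exprn_ge0.
- by rewrite mulr_ge0 ?invr_ge0 ?ler0n ?exprn_ge0.
- by apply: exp2_inv_le_expRN_exp_term => //; lia.
- exact: (shifted_generator_pow_ge R n_ge2 x_lt y_lt).
Qed.
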